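(* Let $\Omega\subset\mathbb{R}^d$ be a bounded Lipschitz domain, $0<\alpha\le1$, $\delta,M_1,M_2>0$, and let $\varrho=\varrho(\Omega,\delta,M_1,M_2,\alpha)>0$ be the radius of guaranteed local injectivity described in the context. Then for every $0<\gamma<\frac{\varrho}{2}$ there exists $\lambda>0$, depending only on $\gamma,d,\Omega,\delta,\alpha,M_1,M_2$ (and not on the maps below), such that for all $y,z\in C^{1,\alpha}(\Omega;\mathbb{R}^d)$ that both satisfy $\det\nabla(\cdot)\ge\delta$, $|\nabla(\cdot)|\le M_1$ on $\Omega$ and $\|\nabla(\cdot)\|_{C^\alpha(\Omega)}\le M_2$, and with $\|y-z\|_{L^\infty}\le\lambda$, we have $$\tilde P^{(\gamma)}_y(0)\subset P_z(0),$$ where $$\tilde P^{(\gamma)}_y(0):=\{x_1\in\Omega:\ \exists x_2\in\Omega\text{ with }\operatorname{dist}(x_2,\partial\Omega)>\gamma,\ y(x_1)=y(x_2),\ |x_1-x_2|>\tfrac{\varrho}{2}+\gamma\},$$ $$P_z(0):=\{x\in\Omega:\ \exists\tilde x\in\Omega\text{ with } z(x)=z(\tilde x)\text{ and }|x-\tilde x|>\tfrac{\varrho}{2}\}.$$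
   Context: The radius $\varrho>0$ depends only on $\Omega,\delta,M_1,M_2,\alpha$ and has the property that every $y\in C^{1,\alpha}(\Omega;\mathbb{R}^d)$ with $\det\nabla y\ge\delta$, $|\nabla y|\le M_1$, $\|\nabla y\|_{C^\alpha(\Omega)}\le M_2$ is injective on $B_\varrho(\bar x)\cap\Omega$ for every $\bar x\in\bar\Omega$, with $\frac12\frac{\delta}{M_1^{d-1}}|x_1-x_2|\le|y(x_1)-y(x_2)|\le M_1\sqrt{1+L^2}|x_1-x_2|$ for $x_1,x_2\in B_\varrho(\bar x)\cap\Omega$ ($L$ bounding the local Lipschitz constants of $\partial\Omega$). Norms are Euclidean. *)

From HB Require Import structures.
From mathcomp Require Import all_boot all_order all_algebra.
From mathcomp Require Import all_classical all_reals all_analysis.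
Set Implicit Arguments. Unset Strict Implicit. Unset Printing Implicit Defensive.
Import Order.TTheory GRing.Theory Num.Theory.
Import numFieldNormedType.Exports.
Local Open Scope classical_set_scope.
Local Open Scope ring_scope.

Section Defs.
Variables (R : realType) (d : nat).
Notation V := 'rV[R]_d.

Definition edot (u v : V) : R := \sum_(i < d) u ord0 i * v ord0 i.
Definition enorm (u : V) : R := Num.sqrt (edot u u).
Definition mnorm (A : 'M[R]_d) : R := Num.sqrt (\sum_(i < d) \sum_(j < d) A i j ^+ 2).

(* Gradient matrix: (grad y x) i j = partial_j y_i (x). *)
Definition grad (y : V -> V) (x : V) : 'M[R]_d :=
  \matrix_(i < d, j < d) ('d y x (delta_mx ord0 j : V)) ord0 i.

Definition bdry (O : set V) : set V := closure O `\` interior O.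

Definition eball (c : V) (r : R) : set V := [set x | enorm (x - c) < r].

(* Bounded Lipschitz domain whose boundary is locally the subgraph of a
   Lipschitz function with Lipschitz constant at most L. *)
Definition lipschitz_domain (L : R) (O : set V) : Prop :=
  [/\ open O, connected O,
      (exists K : R, forall x, O x -> enorm x <= K) &
      forall p, bdry O p ->
        exists r : R, 0 < r /\
        exists e : V, enorm e = 1 /\
        exists g : V -> R,
          (forall u v, `|g u - g v| <= L * enorm (u - v)) /\
          (forall x, enorm (x - p) < r ->
             (O x <-> edot (x - p) e < g ((x - p) - edot (x - p) e *: e)))].

(* y in C^{1,alpha}(O; R^d) with det grad y >= delta, |grad y| <= M1 and
   ||grad y||_{C^alpha(O)} = sup |grad y| + [grad y]_alpha <= M2. *)
Definition admissible (O : set V) (alpha delta M1 M2 : R) (y : V -> V) : Prop :=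
  [/\ (forall x, O x -> differentiable y x),
      (forall x, O x -> delta <= \det (grad y x)),
      (forall x, O x -> mnorm (grad y x) <= M1) &
      exists A B : R, [/\ A + B <= M2,
        (forall x, O x -> mnorm (grad y x) <= A) &
        (forall x1 x2, O x1 -> O x2 ->
           mnorm (grad y x1 - grad y x2) <= B * powR (enorm (x1 - x2)) alpha)]].

Definition injectivity_radius (O : set V) (L alpha delta M1 M2 rho : R) : Prop :=
  forall y, admissible O alpha delta M1 M2 y ->
  forall xbar, closure O xbar ->
  forall x1 x2, O x1 -> O x2 -> eball xbar rho x1 -> eball xbar rho x2 ->
    2^-1 * (delta / M1 ^+ d.-1) * enorm (x1 - x2) <= enorm (y x1 - y x2) /\
    enorm (y x1 - y x2) <= M1 * Num.sqrt (1 + L ^+ 2) * enorm (x1 - x2).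

Definition dist_bdry_gt (O : set V) (x : V) (gamma : R) : Prop :=
  exists eta : R, gamma < eta /\ forall b, bdry O b -> eta <= enorm (x - b).

Definition Ptilde (O : set V) (rho gamma : R) (y : V -> V) : set V :=
  [set x1 | O x1 /\ exists x2, [/\ O x2, dist_bdry_gt O x2 gamma,
       y x1 = y x2 & rho / 2 + gamma < enorm (x1 - x2)]].

Definition P0 (O : set V) (rho : R) (z : V -> V) : set V :=
  [set x | O x /\ exists xt, [/\ O xt, z x = z xt & rho / 2 < enorm (x - xt)]].

End Defs.

From HB Require Import structures.
From mathcomp Require Import all_boot all_order all_algebra.
From mathcomp Require Import all_classical all_reals all_analysis.
From mathcomp Require Import ring lra.
Set Implicit Arguments. Unset Strict Implicit. Unset Printing Implicit Defensive.
Import Order.TTheory GRing.Theory Num.Theory.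
Import numFieldNormedType.Exports.
Local Open Scope classical_set_scope.
Local Open Scope ring_scope.

(* Take x1 in Ptilde with partner x2: y x1 = y x2, x2 at distance
   more than gamma from the boundary, and |x1 - x2| > rho/2 + gamma.  Since
   |y - z| <= lambda, z x1 lies within 2 lambda of z x2.  The closed ball B of
   radius gamma/2 about x2 lies in O (a segment leaving O meets its boundary),
   and on B the injectivity radius gives |z x - z x2| >= c |x - x2| with
   c = delta / (2 M1^(d-1)).  A minimiser xm of |z - z x1| over the compact B
   is then interior to B once 2 lambda < c gamma / 4, and an interior minimiser
   is a zero: otherwise a first-order step along (grad z)^-1 (z x1 - z xm)
   decreases the distance.  So z x1 = z xm with |xm - x2| < gamma/2, and
   |x1 - xm| > rho/2. *)

Section EuclideanNorm.
Variables (R : realType) (d : nat).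
Notation V := 'rV[R]_d.
Implicit Types (u v w : V).

Lemma edotC u v : edot u v = edot v u.
Proof. by apply: eq_bigr => i _; rewrite mulrC. Qed.

Lemma edotDl u v w : edot (u + v) w = edot u w + edot v w.
Proof. by rewrite /edot -big_split; apply: eq_bigr => i _; rewrite !mxE mulrDl. Qed.

Lemma edotZl (k : R) u v : edot (k *: u) v = k * edot u v.
Proof. by rewrite /edot mulr_sumr; apply: eq_bigr => i _; rewrite !mxE mulrA. Qed.

Lemma edot_ge0 u : 0 <= edot u u.
Proof. by apply: sumr_ge0 => i _; rewrite -expr2 sqr_ge0. Qed.

Lemma edot_eq0 u : (edot u u == 0) = (u == 0).
Proof.
apply/eqP/eqP => [u0|->]; last by rewrite /edot big1 // => i _; rewrite mxE mul0r.
apply/rowP => i; rewrite mxE; apply/eqP.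
have /(_ i isT)/eqP : forall j, xpredT j -> u ord0 j * u ord0 j = 0.
  by apply: psumr_eq0P u0 => j _; rewrite -expr2 sqr_ge0.
by rewrite mulf_eq0 orbb.
Qed.

Lemma enorm_ge0 u : 0 <= enorm u.
Proof. exact: sqrtr_ge0. Qed.

Lemma enorm_sq u : enorm u ^+ 2 = edot u u.
Proof. by rewrite sqr_sqrtr // edot_ge0. Qed.

Lemma enorm_eq0 u : (enorm u == 0) = (u == 0).
Proof. by rewrite sqrtr_eq0 le_eqVlt ltNge edot_ge0 orbF edot_eq0. Qed.

Lemma enorm_gt0 u : (0 < enorm u) = (u != 0).
Proof. by rewrite lt_neqAle enorm_ge0 andbT eq_sym enorm_eq0. Qed.

Lemma enorm0 : enorm (0 : V) = 0.
Proof. by apply/eqP; rewrite enorm_eq0. Qed.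

Lemma enormZ (k : R) u : enorm (k *: u) = `|k| * enorm u.
Proof.
by rewrite /enorm edotZl edotC edotZl mulrA -expr2 sqrtrM ?sqr_ge0 // sqrtr_sqr.
Qed.

Lemma enormN u : enorm (- u) = enorm u.
Proof. by rewrite -scaleN1r enormZ normrN normr1 mul1r. Qed.

Lemma enorm_distC u v : enorm (u - v) = enorm (v - u).
Proof. by rewrite -enormN opprB. Qed.

Lemma edot_le_enorm u v : edot u v <= enorm u * enorm v.
Proof.
have [->|u0] := eqVneq u 0.
  by rewrite enorm0 mul0r /edot big1 // => i _; rewrite mxE mul0r.
have [->|v0] := eqVneq v 0.
  by rewrite enorm0 mulr0 /edot big1 // => i _; rewrite mxE mulr0.
(* [0 <= t |u - v / t|^2] with [t = |v| / |u|] *)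
have up : 0 < enorm u by rewrite enorm_gt0.
have vp : 0 < enorm v by rewrite enorm_gt0.
pose t := enorm v / enorm u.
have tp : 0 < t by rewrite divr_gt0.
have : 0 <= \sum_(i < d) t * (u ord0 i - t^-1 * v ord0 i) ^+ 2.
  by apply: sumr_ge0 => i _; rewrite mulr_ge0 ?sqr_ge0 ?ltW.
have -> : \sum_(i < d) t * (u ord0 i - t^-1 * v ord0 i) ^+ 2
    = t * edot u u + t^-1 * edot v v - 2 * edot u v.
  rewrite /edot !mulr_sumr -big_split -sumrB; apply: eq_bigr => i _ /=.
  by field; rewrite gt_eqF.
rewrite -!enorm_sq subr_ge0 /t invf_div => h.
rewrite -(@ler_pM2l _ 2) //; apply: le_trans h _.
by rewrite le_eqVlt; apply/orP; left; apply/eqP; field; rewrite !gt_eqF.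
Qed.

Lemma enormD u v : enorm (u + v) <= enorm u + enorm v.
Proof.
rewrite -(@ler_pXn2r _ 2) ?nnegrE ?addr_ge0 ?enorm_ge0 //.
rewrite enorm_sq edotDl (edotC u) (edotC v) !edotDl -!enorm_sq (edotC v u).
have := edot_le_enorm u v; rewrite sqrrD; lra.
Qed.

Lemma enorm_distD u v w : enorm (u - w) <= enorm (u - v) + enorm (v - w).
Proof.
have -> : u - w = (u - v) + (v - w) by rewrite addrA subrK.
exact: enormD.
Qed.

Lemma enorm_lipschitz u v : `|enorm u - enorm v| <= enorm (u - v).
Proof.
rewrite ler_norml; apply/andP; split.
  by have := enormD (v - u) u; rewrite subrK enorm_distC; lra.
by have := enormD (u - v) v; rewrite subrK; lra.
Qed.

Lemma coord_le_enorm u i : `|u ord0 i| <= enorm u.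
Proof.
rewrite -sqrtr_sqr; apply: ler_wsqrtr.
rewrite /edot (bigD1 i) //= -expr2 lerDl.
by apply: sumr_ge0 => j _; rewrite -expr2 sqr_ge0.
Qed.

Lemma normr_le_enorm u : `|u| <= enorm u.
Proof.
rewrite [`|u|]mx_normrE; apply: bigmax_le => [|[i j] _]; first exact: enorm_ge0.
by rewrite /= (ord1 i); apply: coord_le_enorm.
Qed.

Lemma enorm_le_normr u : enorm u <= Num.sqrt d%:R * `|u|.
Proof.
have coord_le_normr i : `|u ord0 i| <= `|u|.
  by rewrite [`|u|]mx_normrE; apply/bigmax_geP; right; exists (ord0, i).
rewrite -[`|u|]normr_id -sqrtr_sqr -sqrtrM ?ler0n //; apply: ler_wsqrtr.
rewrite /edot -[d in d%:R]card_ord -sumr_const mulr_suml.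
apply: ler_sum => i _; rewrite mul1r -expr2 -real_normK ?num_real //.
by rewrite lerXn2r ?nnegrE ?normr_ge0 ?normr_id.
Qed.

Lemma cvg_enorm {T} {F : set_system T} {FF : Filter F} {f : T -> V} {l : V} :
  f @ F --> l -> forall e, 0 < e -> \forall t \near F, enorm (l - f t) < e.
Proof.
move=> /cvgrPdist_lt fl e e0.
(* [+ 1] keeps [C] positive when [d = 0] *)
pose C : R := Num.sqrt d%:R + 1.
have C0 : 0 < C by rewrite ltr_wpDl ?sqrtr_ge0.
near=> t; apply: (le_lt_trans (enorm_le_normr _)).
apply: (@le_lt_trans _ _ (C * `|l - f t|)); first by rewrite ler_wpM2r ?lerDl.
by rewrite -ltr_pdivlMl // mulrC; near: t; apply: fl; rewrite divr_gt0.
Unshelve. all: by end_near. Qed.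

Lemma near_enorm_lt (x : V) e : 0 < e -> \forall u \near x, enorm (u - x) < e.
Proof.
move=> e0; near=> u; rewrite enorm_distC; near: u.
exact: (cvg_enorm (FF := nbhs_filter x) cvg_id e0).
Unshelve. all: by end_near. Qed.

Lemma continuous_enorm_dist (w : V) : continuous (fun u : V => enorm (u - w)).
Proof.
move=> u0; apply/(cvgrPdist_lt (FF := nbhs_filter u0)) => e e0.
near=> u; apply: le_lt_trans (enorm_lipschitz _ _) _.
by rewrite opprB addrA subrK enorm_distC; near: u; exact: near_enorm_lt.
Unshelve. all: by end_near. Qed.

End EuclideanNorm.

Section Boundary.
Variables (R : realType) (d : nat).
Notation V := 'rV[R]_d.

Lemma connected_meets_bdry (O S : set V) :
  open O -> connected S -> S `&` O !=set0 -> ~ S `<=` O -> S `&` bdry O !=set0.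
Proof.
move=> /interior_id intO cS SO SnO; apply/set0P/eqP => SbO; apply: SnO.
suff <- : S `&` O = S by move=> x [].
apply: cS => //; first by exists O => //; rewrite -intO; exact: open_interior.
exists (closure O); first exact: closed_closure.
apply/seteqP; split=> x [Sx Ox]; split=> //; first exact: subset_closure.
apply: contrapT => nOx; suff : (S `&` bdry O) x by rewrite SbO.
by split=> //; split=> //; rewrite intO.
Qed.

Lemma segment_meets_bdry (O : set V) a b : open O -> O a -> ~ O b ->
  exists2 t, 0 <= t <= 1 & bdry O (a + t *: (b - a)).
Proof.
move=> oO Oa nOb; pose f t := a + t *: (b - a).
have cS : connected (f @` [set t | 0 <= t <= 1]).
  apply: connected_continuous_connected; first exact: segment_connected.
  apply: continuous_subspaceT => t; apply: cvgD; first exact: cvg_cst.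
  exact: scalel_continuous.
rewrite set_itvcc in cS.
have SO : f @` [set t | 0 <= t <= 1] `&` O !=set0.
  exists a; split=> //; exists 0; last by rewrite /f scale0r addr0.
  by rewrite /= lexx ler01.
have SnO : ~ f @` [set t | 0 <= t <= 1] `<=` O.
  move/(_ b) => bO; apply/nOb/bO; exists 1; last by rewrite /f scale1r addrC subrK.
  by rewrite /= lexx ler01.
have [x [[t t01 <-] bt]] := connected_meets_bdry oO cS SO SnO.
by exists t.
Qed.

Lemma closed_ball_subset_open (O : set V) c eta r :
  open O -> O c -> (forall b, bdry O b -> eta <= enorm (c - b)) -> r < eta ->
  forall x, enorm (x - c) <= r -> O x.
Proof.
move=> oO Oc cb r_eta x xc; apply: contrapT => nOx.
have [t /andP[t0 t1] bt] := segment_meets_bdry oO Oc nOx.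
have := cb _ bt; rewrite opprD addrA subrr add0r enormN enormZ ger0_norm //.
have := ler_piMl (enorm_ge0 (x - c)) t1; lra.
Qed.

End Boundary.

Section LocalSurjectivity.
Variables (R : realType) (d : nat).
Notation V := 'rV[R]_d.

Lemma grad_jacobian (z : V -> V) x : grad z x = (jacobian z x)^T.
Proof. by apply/matrixP => i j; rewrite !mxE. Qed.

Lemma derivable_descent (z : V -> V) x v w :
  derivable z x v -> 'D_v z x = w - z x -> z x != w ->
  \forall h \near 0^'+, enorm (z (h *: v + x) - w) < enorm (z x - w).
Proof.
move=> dz Dz zxw; set e := z x - w.
have ep : 0 < enorm e by rewrite enorm_gt0 subr_eq0.
have cv : (fun h => h^-1 *: (z (h *: v + x) - z x)) @ 0^'+ --> w - z x.
  by rewrite -Dz; apply: cvg_dnbhs_at_right; exact: dz.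
near=> h.
have h0 : 0 < h by near: h; exact: nbhs_right_gt.
have h1 : h < 1 by near: h; exact: nbhs_right_lt.
have qe : enorm (w - z x - h^-1 *: (z (h *: v + x) - z x)) < enorm e.
  by near: h; exact: (cvg_enorm (FF := at_right_proper_filter 0) cv ep).
set q := h^-1 *: _ in qe *.
(* [q] is a difference quotient of [z], tending to ['D_v z x = - e] *)
have {}qe : enorm (q + e) < enorm e by rewrite -enormN opprD opprB addrC.
have -> : z (h *: v + x) - w = (1 - h) *: e + h *: (q + e).
  have hq : h *: q = z (h *: v + x) - z x.
    by rewrite /q scalerA mulfV ?gt_eqF // scale1r.
  apply/esym; rewrite [h *: (q + e)]scalerDr hq scalerBl scale1r.
  by rewrite addrACA addNr addr0 addrC addrA subrK.
apply: le_lt_trans (enormD _ _) _.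
by rewrite !enormZ !gtr0_norm ?subr_gt0 //; nra.
Unshelve. all: by end_near. Qed.

Lemma local_min_dist_eq (z : V -> V) x w :
  differentiable z x -> \det (grad z x) != 0 ->
  (\forall u \near x, enorm (z x - w) <= enorm (z u - w)) -> z x = w.
Proof.
move=> dz detz xmin; apply: contrapT => /eqP zxw.
have J_unit : jacobian z x \in unitmx by rewrite unitmxE -det_tr -grad_jacobian unitfE.
pose v := (w - z x) *m invmx (jacobian z x).
have Dv : 'D_v z x = w - z x by rewrite deriveEjacobian // mulmxKV.
have to_x : (fun h : R => h *: v + x) @ 0^'+ --> x.
  apply: cvg_at_right_filter; rewrite -[x in _ --> x]add0r -(scale0r v).
  by apply: cvgD; [exact: scalel_continuous | exact: cvg_cst].
near (0 : R)^'+ => h.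
have : enorm (z x - w) <= enorm (z (h *: v + x) - w) by near: h; exact: to_x _ xmin.
rewrite leNgt => /negP; apply; near: h.
exact: derivable_descent (diff_derivable (v := v) dz) Dv zxw.
Unshelve. all: by end_near. Qed.

Lemma closed_ball_compact (c : V) r : compact [set x | enorm (x - c) <= r].
Proof.
apply: bounded_closed_compact.
  exists (`|c| + r); split=> [|M rM x xc]; first exact: num_real.
  apply: le_trans (ltW rM); rewrite -[x](subrK c) addrC.
  by apply: le_trans (ler_normD _ _) _; rewrite lerD2l (le_trans (normr_le_enorm _)).
have -> : [set x | enorm (x - c) <= r] = (fun x => enorm (x - c)) @^-1` [set t | t <= r]
  by [].
apply: (@preimage_closed _ _ _ [set t | t <= r]); last exact: closed_le.
by move=> x _; exact: continuous_enorm_dist.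
Qed.

Lemma expanding_covers_ball (z : V -> V) x0 w r c : 0 < r ->
  (forall x, enorm (x - x0) <= r -> differentiable z x /\ \det (grad z x) != 0) ->
  (forall x, enorm (x - x0) <= r -> c * enorm (x - x0) <= enorm (z x - z x0)) ->
  enorm (w - z x0) < c * r / 2 -> exists2 x, enorm (x - x0) < r & z x = w.
Proof.
move=> r0 zK zlow wz; pose K := [set x | enorm (x - x0) <= r].
have c0 : 0 < c by move: (enorm_ge0 (w - z x0)) wz r0; nra.
have Kx0 : K x0 by rewrite /K /= subrr enorm0 ltW.
have cont : {within K, continuous (fun x => enorm (z x - w))}.
  apply: continuous_in_subspaceT => x /set_mem Kx.
  apply: (continuous_comp (f := z) (g := fun u => enorm (u - w))).
    exact: differentiable_continuous (zK x Kx).1.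
  exact: continuous_enorm_dist.
have K0 : K !=set0 by exists x0.
have cK : compact K by exact: closed_ball_compact.
have [xm /set_mem Kxm xm_min] := EVT_min_rV K0 cK cont.
(* [c |xm - x0| <= |z xm - z x0| <= |z xm - w| + |w - z x0| <= 2 |w - z x0| < c r] *)
have xm_r : enorm (xm - x0) < r.
  have := zlow xm Kxm; have := enorm_distD (z xm) w (z x0).
  have := xm_min x0 (mem_set Kx0); rewrite (enorm_distC (z x0)); nra.
exists xm => //; apply: local_min_dist_eq; [exact: (zK xm Kxm).1 | exact: (zK xm Kxm).2 |].
near=> u; apply/xm_min/mem_set; rewrite /K /=.
have : enorm (u - xm) < r - enorm (xm - x0) by near: u; apply: near_enorm_lt; rewrite subr_gt0.
by have := enorm_distD u xm x0; lra.
Unshelve. all: by end_near. Qed.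

End LocalSurjectivity.

Theorem proposition3p10 (R : realType) (d : nat) (O : set 'rV[R]_d)
  (L alpha delta M1 M2 rho : R) :
  lipschitz_domain L O ->
  0 < alpha -> alpha <= 1 -> 0 < delta -> 0 < M1 -> 0 < M2 ->
  0 < rho -> injectivity_radius O L alpha delta M1 M2 rho ->
  forall gamma : R, 0 < gamma -> gamma < rho / 2 ->
  exists lambda : R, 0 < lambda /\
    forall y z : 'rV[R]_d -> 'rV[R]_d,
      admissible O alpha delta M1 M2 y ->
      admissible O alpha delta M1 M2 z ->
      (forall x, O x -> enorm (y x - z x) <= lambda) ->
      Ptilde O rho gamma y `<=` P0 O rho z.
Proof.
move=> [oO _ _ _] _ _ delta0 M10 _ rho0 inj gamma gamma0 gamma_rho.
pose c := 2^-1 * (delta / M1 ^+ d.-1); pose r := gamma / 2.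
have c0 : 0 < c by rewrite mulr_gt0 ?invr_gt0 // divr_gt0 // exprn_gt0.
have r0 : 0 < r by rewrite divr_gt0.
exists (c * r / 8); split; first by apply: divr_gt0 => //; exact: mulr_gt0.
move=> y z _ adm_z yz x1 [Ox1 [x2 [Ox2 [eta [gamma_eta x2_bdry] yx12 x12_far]]]].
have [dz detz _ _] := adm_z.
have r_eta : r < eta by rewrite /r; lra.
have ball_O := closed_ball_subset_open oO Ox2 x2_bdry r_eta.
have zK x : enorm (x - x2) <= r -> differentiable z x /\ \det (grad z x) != 0.
  move=> /ball_O Ox; split; first exact: dz.
  by rewrite gt_eqF // (lt_le_trans delta0 (detz x Ox)).
have zlow x : enorm (x - x2) <= r -> c * enorm (x - x2) <= enorm (z x - z x2).
  move=> xr; have [] // := inj z adm_z x2 (subset_closure Ox2) x x2 (ball_O x xr) Ox2.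
    by rewrite /eball /=; move: xr; rewrite /r; lra.
  by rewrite /eball /= subrr enorm0.
have zx12 : enorm (z x1 - z x2) < c * r / 2.
  have := enorm_distD (z x1) (y x1) (z x2); rewrite (enorm_distC (z x1) (y x1)).
  have := yz x1 Ox1; have := yz x2 Ox2; rewrite -yx12.
  by have := mulr_gt0 c0 r0; lra.
have [xm xm_r zxm] := expanding_covers_ball r0 zK zlow zx12.
split=> //; exists xm; split=> //; first exact/ball_O/ltW.
by have := enorm_distD x1 xm x2; move: xm_r; rewrite /r; lra.
Qed.
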